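(* For every $n\geq 1$, there are at least $2^{2^n-1}$ $n$-cube unique sink orientations that have property L.
   Context: For sets $U,V$ let $U\oplus V=(U\cup V)\setminus(U\cap V)$ and $[U,W]=\{X:U\subseteq X\subseteq W\}$. An $n$-cube orientation is a directed graph $\mathcal{O}$ on vertex set $[\emptyset,[n]]$ (all subsets of $[n]=\{1,\dots,n\}$) containing, for every vertex $V$ and every $i\in[n]$, exactly one of the directed edges $(V,V\oplus\{i\})$, $(V\oplus\{i\},V)$. Its outmap is $\phi_{\mathcal{O}}(V)=\{i: (V,V\oplus\{i\})\in\mathcal{O}\}$. For a vertex $V$, the L-graph $\mathcal{L}_{\mathcal{O}}(V)$ has vertex set $[n]\setminus V$ and an arc $(i,j)$ for distinct $i,j\notin V$ whenever $j\in\phi_{\mathcal{O}}(V)\oplus\phi_{\mathcal{O}}(V\cup\{i\})$. $\mathcal{O}$ has property L if all its L-graphs are acyclic. A face is the subgraph induced by an interval $[U,W]$ of vertices; $\mathcal{O}$ is a unique sink orientation (USO) if every face has exactly one sink (vertex with no outgoing edge within the face). *)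

From mathcomp Require Import all_boot.
Set Implicit Arguments. Unset Strict Implicit. Unset Printing Implicit Defensive.

(* Vertices of the n-cube: subsets of [n], encoded as {set 'I_n}. *)
Notation vtx n := {set 'I_n}.

Definition symd (n : nat) (U V : vtx n) : vtx n := (U :|: V) :\: (U :&: V).

Definition digraph (n : nat) := {set (vtx n * vtx n)}.

Definition is_orientation (n : nat) (O : digraph n) : bool :=
  [forall e in O, exists i : 'I_n, e.2 == symd e.1 [set i]] &&
  [forall V : vtx n, forall i : 'I_n,
     ((V, symd V [set i]) \in O) (+) ((symd V [set i], V) \in O)].

Definition outmap (n : nat) (O : digraph n) (V : vtx n) : vtx n :=
  [set i | (V, symd V [set i]) \in O].

Definition Lgraph_arc (n : nat) (O : digraph n) (V : vtx n) : rel 'I_n :=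
  fun i j => [&& i \notin V, j \notin V, i != j &
     j \in symd (outmap O V) (outmap O (V :|: [set i]))].

Definition acyclic (T : eqType) (r : rel T) : Prop :=
  ~ exists s : seq T, s != [::] /\ cycle r s.

Definition property_L (n : nat) (O : digraph n) : Prop :=
  forall V : vtx n, acyclic (Lgraph_arc O V).

Definition in_interval (n : nat) (U W X : vtx n) : bool :=
  (U \subset X) && (X \subset W).

Definition is_face_sink (n : nat) (O : digraph n) (U W X : vtx n) : bool :=
  in_interval U W X &&
  [forall Y : vtx n, in_interval U W Y ==> ((X, Y) \notin O)].

Definition is_USO (n : nat) (O : digraph n) : Prop :=
  is_orientation O /\
  forall U W : vtx n, U \subset W ->
    #|[set X : vtx n | is_face_sink O U W X]| = 1.

From mathcomp Require Import all_boot.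
Set Implicit Arguments. Unset Strict Implicit. Unset Printing Implicit Defensive.

(** Orient the [i]-edges of the cube by a rule [d V i] (true: towards the
    endpoint containing [i]) that only reads the coordinates of [V] below [i].
    Every face sink is then the unique solution of a triangular system, which
    is solved coordinate by coordinate, so the orientation is a USO; and an
    arc [(i, j)] of an L-graph needs [d] to depend on coordinate [i] at
    coordinate [j], forcing [i < j], so the L-graphs are acyclic.  Choosing
    [d V i] freely for each of the [2^n - 1] nonempty traces
    [(V \cap [0, i)) \cup {i}] gives [2^(2^n - 1)] distinct such orientations. *)

Section LowerDependence.
Variable n : nat.

Lemma in_symd (U V : vtx n) x : (x \in symd U V) = (x \in U) (+) (x \in V).
Proof. by rewrite /symd !inE; case: (x \in U); case: (x \in V). Qed.

Lemma symd1_inj (V : vtx n) : injective (fun i => symd V [set i]).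
Proof.
move=> i j /setP /(_ i); rewrite !in_symd !inE eqxx.
by case: (i \in V); case: eqP => //= ->.
Qed.

Lemma symd1K (V : vtx n) i : symd (symd V [set i]) [set i] = V.
Proof. by apply/setP=> x; rewrite !in_symd; case: (x \in V); case: (x \in _). Qed.

Definition lower_dep (g : vtx n -> 'I_n -> bool) : Prop :=
  forall (V V' : vtx n) (i : 'I_n),
  (forall j : 'I_n, j < i -> (j \in V) = (j \in V')) -> g V i = g V' i.

Lemma lower_dep_symd1 g (V : vtx n) (i : 'I_n) :
  lower_dep g -> g (symd V [set i]) i = g V i.
Proof.
move=> gP; apply: gP => j ji; rewrite in_symd inE.
by rewrite (_ : (j == i) = false) ?addbF //; apply/eqP=> ji'; rewrite ji' ltnn in ji.
Qed.

Lemma lower_dep_setU1 g (V : vtx n) (i j : 'I_n) :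
  lower_dep g -> j < i -> g (V :|: [set i]) j = g V j.
Proof.
move=> gP ji; apply: gP => k kj; rewrite !inE.
by rewrite (_ : (k == i) = false) ?orbF //; apply/eqP=> ki; rewrite ki ltnNge ltnW in kj.
Qed.

Section TriangularSystem.
Variables (g : vtx n -> 'I_n -> bool) (gP : lower_dep g).

Definition solves (X : vtx n) : bool := [forall i, (i \in X) == g X i].

Lemma solves_uniq (X Y : vtx n) : solves X -> solves Y -> X = Y.
Proof.
move=> /forallP sX /forallP sY.
suff agree m (i : 'I_n) : i < m -> (i \in X) = (i \in Y).
  by apply/setP=> i; apply: (agree n).
elim: m i => // m IH i; rewrite ltnS leq_eqVlt => /predU1P [im | /IH //].
rewrite (eqP (sX i)) (eqP (sY i)); apply: gP => j; rewrite im; exact: IH.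
Qed.

Fixpoint solve_upto (k : nat) : vtx n :=
  if k is k'.+1 then
    solve_upto k' :|: [set i : 'I_n | (val i == k') && g (solve_upto k') i]
  else set0.

Lemma mem_solve_upto k (i : 'I_n) :
  (i \in solve_upto k) = (i < k) && g (solve_upto i) i.
Proof.
elim: k => [|k IH] /=; first by rewrite inE.
rewrite !inE IH ltnS.
by case: (ltngtP i k) => ik //=; rewrite ?orbF ?andbF // -ik.
Qed.

Lemma solves_solve_upto : solves (solve_upto n).
Proof.
apply/forallP=> i; rewrite mem_solve_upto ltn_ord /=.
by apply/eqP/gP=> j ji; rewrite !mem_solve_upto ji ltn_ord.
Qed.

Lemma card_solves : #|[set X | solves X]| = 1.
Proof.
rewrite (_ : [set X | solves X] = [set solve_upto n]) ?cards1 //.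
apply/setP=> X; rewrite !inE; apply/idP/eqP => [sX | ->].
  exact: solves_uniq sX solves_solve_upto.
exact: solves_solve_upto.
Qed.

End TriangularSystem.

Section OrientBy.
Variables (d : vtx n -> 'I_n -> bool) (dP : lower_dep d).

Definition orient_by : digraph n :=
  [set e | [exists i, (e.2 == symd e.1 [set i]) && (d e.1 i == (i \notin e.1))]].

Lemma mem_orient_by (V : vtx n) (i : 'I_n) :
  ((V, symd V [set i]) \in orient_by) = (d V i == (i \notin V)).
Proof.
rewrite inE /=; apply/existsP/idP => [[j /andP [/eqP /symd1_inj <- //]] | dV].
by exists i; rewrite eqxx.
Qed.

Lemma outmap_orient_by (V : vtx n) : outmap orient_by V = [set i | d V i == (i \notin V)].
Proof. by apply/setP=> i; rewrite /outmap [in LHS]inE mem_orient_by inE. Qed.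

Lemma orient_by_is_orientation : is_orientation orient_by.
Proof.
apply/andP; split.
  apply/forallP=> e; apply/implyP; rewrite inE => /existsP [i /andP [ei _]].
  by apply/existsP; exists i.
apply/forallP=> V; apply/forallP=> i.
have := mem_orient_by (symd V [set i]) i.
rewrite symd1K => ->; rewrite mem_orient_by lower_dep_symd1 // in_symd inE eqxx.
by case: (d V i); case: (i \in V).
Qed.

Lemma Lgraph_arc_orient_by (V : vtx n) (i j : 'I_n) : Lgraph_arc orient_by V i j -> i < j.
Proof.
case/and4P=> _ _ ij; rewrite !outmap_orient_by in_symd !inE.
case: (ltngtP i j) => // ji; last by case/eqP: ij; apply: val_inj.
by rewrite lower_dep_setU1 // (eq_sym j i) (negbTE ij) orbF addbb.
Qed.

Lemma orient_by_property_L : property_L orient_by.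
Proof.
move=> V [[| x s] [// _ /= xs]].
have lt_trans : transitive (fun a b : 'I_n => a < b) by move=> ? ? ?; apply: ltn_trans.
have /(order_path_min lt_trans)/allP/(_ x) : path (fun a b : 'I_n => a < b) x (rcons s x).
  by apply: sub_path xs => a b; apply: Lgraph_arc_orient_by.
by rewrite mem_rcons mem_head ltnn => /(_ isT).
Qed.

Section Face.
Variables U W : vtx n.
Hypothesis UW : U \subset W.

Definition sink_rule (X : vtx n) (i : 'I_n) : bool :=
  if i \in W :\: U then d X i else i \in U.

Lemma lower_dep_sink_rule : lower_dep sink_rule.
Proof. by move=> V V' i VV'; rewrite /sink_rule (dP VV'). Qed.

Lemma solves_sink_rule_interval (X : vtx n) : solves sink_rule X -> in_interval U W X.
Proof.
move=> /forallP sX; have {}sX i : (i \in X) = sink_rule X i by apply/eqP.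
apply/andP; split; apply/subsetP=> x; rewrite sX /sink_rule inE.
  by move=> xU; rewrite xU.
by case: ifP => [/andP [_ ->] // | _ /(subsetP UW)].
Qed.

Lemma face_sinkE (X : vtx n) : is_face_sink orient_by U W X = solves sink_rule X.
Proof.
rewrite /is_face_sink; apply/idP/idP => [/andP [/andP [UX XW] noOut] | sX].
  apply/forallP=> i; rewrite /sink_rule inE.
  case: (boolP (i \in U)) => [iU | iNU]; first by rewrite (subsetP UX).
  case: (boolP (i \in W)) => [iW | iNW] /=; last first.
    by apply/eqP/negbTE; apply: contra iNW; apply: (subsetP XW).
  have Xi_in : in_interval U W (symd X [set i]).
    apply/andP; split; apply/subsetP=> x; rewrite ?in_symd inE.
      by move=> xU; rewrite (subsetP UX) //; case: eqP xU => // ->; rewrite (negbTE iNU).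
    by case: eqP => [-> // | _]; rewrite addbF; apply: (subsetP XW).
  move/forallP/(_ (symd X [set i])): noOut; rewrite Xi_in mem_orient_by.
  by case: (d X i); case: (i \in X).
rewrite solves_sink_rule_interval //=; apply/forallP=> Y; apply/implyP=> /andP [UY YW].
move/forallP: sX => sX; rewrite inE; apply/existsP=> -[i /andP [/eqP /= Yi dXi]].
move: (sX i) UY YW; rewrite Yi /sink_rule inE.
case: (boolP (i \in U)) => [iU | iNU] /=.
  by move=> /eqP Xi /subsetP/(_ i iU); rewrite in_symd inE eqxx Xi.
case: (boolP (i \in W)) => [iW | iNW] /= /eqP Xi.
  by move: dXi; rewrite Xi; case: (d X i).
by move=> _ /subsetP/(_ i); rewrite in_symd inE eqxx Xi => /(_ isT); apply/negP.
Qed.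

End Face.

Lemma orient_by_USO : is_USO orient_by.
Proof.
split; first exact: orient_by_is_orientation.
move=> U W UW; rewrite -(card_solves (lower_dep_sink_rule U W)).
by congr #|pred_of_set _|; apply/setP=> X; rewrite !inE face_sinkE.
Qed.

End OrientBy.

Lemma orient_by_inj d d' : orient_by d = orient_by d' -> d =2 d'.
Proof.
move=> dd' V i; have := mem_orient_by d' V i.
by rewrite -dd' mem_orient_by; case: (d V i); case: (d' V i); case: (i \in V).
Qed.

End LowerDependence.

Section TableRules.
Variable n : nat.

Definition nonempty_set := {B : {set 'I_n} | B != set0}.

Lemma card_nonempty_set : #|{: nonempty_set}| = 2 ^ n - 1.
Proof.
rewrite card_sig (eq_card (B := predC1 set0)) // cardC1 subn1.
by rewrite -cardsT -powersetT card_powerset cardsT card_ord.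
Qed.

Definition lower_trace (V : vtx n) (i : 'I_n) : vtx n :=
  [set j in V | j < i] :|: [set i].

Definition table_rule (f : {ffun nonempty_set -> bool}) (V : vtx n) i : bool :=
  if insub (lower_trace V i) is Some B then f B else false.

Lemma lower_dep_table_rule f : lower_dep (table_rule f).
Proof.
move=> V V' i VV'; rewrite /table_rule (_ : lower_trace V i = lower_trace V' i) //.
by apply/setP=> j; rewrite !inE; case: (ltnP j i) => [/VV' -> | _]; rewrite ?andbF.
Qed.

Lemma table_rule_inj f f' : table_rule f =2 table_rule f' -> f = f'.
Proof.
move=> ff'; apply/ffunP=> B; have [i0 i0B] := set0Pn _ (valP B).
case: (arg_maxnP (fun j : 'I_n => val j) i0B) => i iB iMax.
have traceB : lower_trace (val B) i = val B.
  apply/setP=> j; rewrite !inE; case: (eqVneq j i) => [-> | ji].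
    by rewrite orbT; apply/esym/iB.
  rewrite orbF andb_idr // => jB.
  by rewrite ltn_neqAle (inj_eq val_inj) ji; apply: iMax.
by move: (ff' (val B) i); rewrite /table_rule traceB valK.
Qed.

End TableRules.

Theorem theorem3p5 (n : nat) (hn : 1 <= n) :
  exists S : seq (digraph n),
    uniq S /\ 2 ^ (2 ^ n - 1) <= size S /\
    (forall O, O \in S -> is_USO O /\ property_L O).
Proof.
exists [seq orient_by (table_rule f) | f : {ffun nonempty_set n -> bool}].
split.
  rewrite map_inj_uniq ?enum_uniq // => f f' /orient_by_inj ff'.
  exact: table_rule_inj.
split; first by rewrite size_map -cardE card_ffun card_bool card_nonempty_set.
move=> _ /mapP [f _ ->]; split.
  exact/orient_by_USO/lower_dep_table_rule.
exact/orient_by_property_L/lower_dep_table_rule.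
Qed.
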